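(* Let $G$ be an unweighted graph (loops allowed). Let $F$ be a bipartite graph and let $\mathcal{H}$ be the class of all graphs that are cross-bipartite swapping in $G$. Then every $\mathcal{H}$-blow-up $H$ of $F$ is bipartite swapping in $G$, i.e. $\hom(H,G)^2\le\hom(H\times K_2,G)$.
   Context: $\hom(H,G)$ is the number of homomorphisms from $H$ to $G$. The tensor product $H\times K_2$ has vertex set $V(H)\times\{1,2\}$, with $(u,i)$ adjacent to $(v,j)$ iff $uv\in E(H)$ and $i\ne j$; its canonical bipartition is $(V(H)\times\{1\})\sqcup(V(H)\times\{2\})$. For $A,B\subseteq V(G)$, $\hom_{\mathrm b}(H\times K_2,G[A,B])$ is the number of homomorphisms $\phi:H\times K_2\to G$ with $\phi(V(H)\times\{1\})\subseteq A$ and $\phi(V(H)\times\{2\})\subseteq B$. A graph $H$ is cross-bipartite swapping in $G$ if for all $A,B\subseteq V(G)$, $\hom(H,G[A])\hom(H,G[B])\le\hom_{\mathrm b}(H\times K_2,G[A,B])$, where $G[A]$ is the induced subgraph. For a class $\mathcal{H}$ and a graph $F$ on vertices $v_1,\dots,v_k$, an $\mathcal{H}$-blow-up of $F$ is obtained by choosing $H_1,\dots,H_k\in\mathcal{H}$, taking their disjoint union, and adding all edges between $V(H_i)$ and $V(H_j)$ whenever $v_iv_j\in E(F)$. *)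

From mathcomp Require Import all_boot.
Set Implicit Arguments. Unset Strict Implicit. Unset Printing Implicit Defensive.

(* Graphs are symmetric relations on finite types.  The target graph G may
   have loops; the graphs H, F (and the H_i) are simple: symmetric and
   irreflexive. *)

Definition hom (VH VG : finType) (H : rel VH) (G : rel VG) : nat :=
  #|[pred f : {ffun VH -> VG} | [forall u, forall v, H u v ==> G (f u) (f v)]]|.

(* hom(H, G[A]): homomorphisms H -> G[A] (induced subgraph on A) are exactly
   the homomorphisms H -> G whose image lies in A. *)
Definition hom_ind (VH VG : finType) (H : rel VH) (G : rel VG) (A : {set VG}) : nat :=
  #|[pred f : {ffun VH -> VG} | [forall u, f u \in A] &&
      [forall u, forall v, H u v ==> G (f u) (f v)]]|.

(* Tensor product H x K_2; vertex (u, true) is (u,1), (u, false) is (u,2). *)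
Definition tensorK2 (VH : finType) (H : rel VH) : rel (VH * bool)%type :=
  fun x y => H x.1 y.1 && (x.2 != y.2).

Definition hom_b (VH VG : finType) (H : rel VH) (G : rel VG) (A B : {set VG}) : nat :=
  #|[pred f : {ffun (VH * bool)%type -> VG} |
      [forall u, f (u, true) \in A] && [forall u, f (u, false) \in B] &&
      [forall x, forall y, tensorK2 H x y ==> G (f x) (f y)]]|.

Definition cross_bipartite_swapping (VH VG : finType) (H : rel VH) (G : rel VG) : Prop :=
  forall A B : {set VG}, hom_ind H G A * hom_ind H G B <= hom_b H G A B.

Definition bipartite_swapping (VH VG : finType) (H : rel VH) (G : rel VG) : Prop :=
  hom H G ^ 2 <= hom (tensorK2 H) G.

Definition bipartite (V : finType) (F : rel V) : Prop :=
  exists c : V -> bool, forall u v, F u v -> c u != c v.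

Definition blowup (VF : finType) (F : rel VF) (VH : VF -> finType)
    (Hs : forall i, rel (VH i)) : rel {i : VF & VH i} :=
  fun x y => ((tag x == tag y) && Hs (tag x) (tagged x) (tagged_as x y))
             || F (tag x) (tag y).

From mathcomp Require Import all_boot.
Set Implicit Arguments. Unset Strict Implicit. Unset Printing Implicit Defensive.

(* Let H be the blow-up, with blocks H_i, and for a set M of vertices of F let
   H_M be the graph on V(H) x {1,2} in which each block H_i with i in M is
   replaced by H_i x K2, while all other edges of H join vertices on the same
   side.  H_{} is two disjoint copies of H, so hom(H_{}, G) = hom(H, G)^2, and
   H_{V(F)} is isomorphic to H x K2: flip the sides of the blocks of one colour
   class of F.  Adding a vertex i to M does not decrease hom(H_M, G): once the
   images of all vertices outside block i are fixed, the extensions to block i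
   are pairs of homomorphisms H_i -> G[A], H_i -> G[B] before, and
   homomorphisms H_i x K2 -> G[A, B] after, where A and B are the common
   neighbourhoods of the images of the two sides of the neighbouring blocks;
   these are compared by cross-bipartite swapping of H_i. *)

Lemma leq_card_map (aT rT : finType) (A : pred aT) (B : pred rT) (h : aT -> rT) :
  injective h -> (forall x, x \in A -> h x \in B) -> #|A| <= #|B|.
Proof.
move=> h_inj hAB; rewrite -(card_in_imset (f := h) (D := A)); last first.
  by move=> ? ? _ _; apply: h_inj.
by apply/subset_leq_card/subsetP => _ /imsetP[x Ax ->]; apply: hAB.
Qed.

Definition is_hom (T VG : finType) (R : rel T) (G : rel VG) (f : {ffun T -> VG}) :=
  [forall u, forall v, R u v ==> G (f u) (f v)].

Lemma is_homP (T VG : finType) (R : rel T) (G : rel VG) (f : {ffun T -> VG}) :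
  reflect (forall u v, R u v -> G (f u) (f v)) (is_hom R G f).
Proof.
apply: (iffP forallP) => [hom_f u v | hom_f u].
  by move/forallP: (hom_f u) => /(_ v) /implyP; apply.
by apply/forallP => v; apply/implyP; apply: hom_f.
Qed.

Section BlowUp.

Variables (VG : finType) (G : rel VG) (VF : finType) (F : rel VF).
Hypotheses (symF : symmetric F) (irrF : irreflexive F).
Variables (VH : VF -> finType) (Hs : forall i, rel (VH i)).

Local Notation V := {i : VF & VH i}.
Local Notation W := (V * bool)%type.
Local Notation H := (blowup F Hs).

(* The graph H_M of the header, for M given as a predicate on VF. *)
Definition tensor_on (M : pred VF) : rel W := fun x y =>
  H x.1 y.1 &&
  (if (tag x.1 == tag y.1) && M (tag x.1) then x.2 != y.2 else x.2 == y.2).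

Lemma tensor_on_in (M : pred VF) i (a b : VH i) s t :
  tensor_on M (Tagged VH a, s) (Tagged VH b, t) =
  Hs a b && (if M i then s != t else s == t).
Proof. by rewrite /tensor_on /blowup /= eqxx tagged_asE irrF orbF. Qed.

Lemma tensor_on_out (M : pred VF) (x y : V) s t : tag x != tag y ->
  tensor_on M (x, s) (y, t) = F (tag x) (tag y) && (s == t).
Proof. by move=> neq_xy; rewrite /tensor_on /blowup /= (negbTE neq_xy). Qed.

Lemma hom_sq_le_tensor_on_none (M : pred VF) : (forall j, M j = false) ->
  hom H G ^ 2 <= hom (tensor_on M) G.
Proof.
move=> M_none.
set P := [set f : {ffun V -> VG} | is_hom H G f].
have -> : hom H G ^ 2 = #|setX P P| by rewrite cardsX /hom !cardsE.
pose pair_hom (p : {ffun V -> VG} * {ffun V -> VG}) : {ffun W -> VG} :=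
  [ffun z => if z.2 then p.1 z.1 else p.2 z.1].
apply: (@leq_card_map _ _ _ _ pair_hom).
  move=> [f1 f2] [g1 g2] eq_fg; congr pair; apply/ffunP => x.
    by have := congr1 (fun f : {ffun W -> VG} => f (x, true)) eq_fg; rewrite !ffunE.
  by have := congr1 (fun f : {ffun W -> VG} => f (x, false)) eq_fg; rewrite !ffunE.
move=> [f1 f2]; rewrite !inE /= => /andP[/is_homP hom_f1 /is_homP hom_f2].
apply/is_homP => -[x s] [y t]; rewrite /tensor_on M_none andbF /=.
by move=> /andP[Hxy /eqP <-]; rewrite !ffunE; case: s => /=; auto.
Qed.

Lemma hom_tensor_on_all_le (M : pred VF) (c : VF -> bool) :
  (forall u v, F u v -> c u != c v) -> (forall j, M j) ->
  hom (tensor_on M) G <= hom (tensorK2 H) G.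
Proof.
move=> c_proper M_all.
pose flip (z : W) : W := (z.1, z.2 (+) c (tag z.1)).
have flipK : involutive flip by move=> [x s]; rewrite /flip /= addbK.
have flipE a b : tensor_on M (flip a) (flip b) = tensorK2 H a b.
  move: a b => [x s] [y t]; rewrite /tensor_on /tensorK2 /flip /= M_all andbT.
  case Hxy: (H x y) => //=.
  have [->|neq_xy] := eqVneq (tag x) (tag y); first by case: s t (c _) => [] [] [].
  move: Hxy; rewrite /blowup (negbTE neq_xy) /= => /c_proper.
  by case: s t (c (tag x)) (c (tag y)) => [] [] [] [].
apply: (@leq_card_map _ _ _ _ (fun f : {ffun W -> VG} => [ffun z => f (flip z)])).
  move=> f g eq_fg; apply/ffunP => z.
  by have := congr1 (fun h : {ffun W -> VG} => h (flip z)) eq_fg; rewrite !ffunE flipK.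
move=> f; rewrite !inE => /is_homP hom_f; apply/is_homP => z w.
by rewrite -flipE !ffunE; apply: hom_f.
Qed.

Section Block.

Variable i : VF.

(* A function on W is determined by [reset v0 f], which represents its
   restriction to the outside of block i, together with [block f]. *)
Definition reset (v0 : VG) (f : {ffun W -> VG}) : {ffun W -> VG} :=
  [ffun y => if tag y.1 == i then v0 else f y].

Definition block (f : {ffun W -> VG}) : {ffun VH i * bool -> VG} :=
  [ffun p => f (Tagged VH p.1, p.2)].

Definition glue (f0 : {ffun W -> VG}) (psi : {ffun VH i * bool -> VG}) :
    {ffun W -> VG} :=
  [ffun y => match tag y.1 =P i with
             | ReflectT e => psi (etagged e, y.2)
             | ReflectF _ => f0 y end].

Lemma glue_in f0 psi (a : VH i) s : glue f0 psi (Tagged VH a, s) = psi (a, s).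
Proof.
rewrite ffunE; case: (tag (Tagged VH a, s).1 =P i) => [e|//].
by rewrite (eq_irrelevance e erefl).
Qed.

Lemma glue_out f0 psi (y : W) : tag y.1 != i -> glue f0 psi y = f0 y.
Proof.
by move=> y_out; rewrite ffunE; case: (tag y.1 =P i) => // e; rewrite e eqxx in y_out.
Qed.

Lemma glue_reset_block v0 f : glue (reset v0 f) (block f) = f.
Proof.
apply/ffunP => -[x s]; rewrite ffunE; case: (tag (x, s).1 =P i) => [e|ne] /=.
  by rewrite ffunE /= etaggedK.
by rewrite ffunE /= (introF eqP ne).
Qed.

Lemma reset_glue v0 f0 psi : reset v0 f0 = f0 -> reset v0 (glue f0 psi) = f0.
Proof.
move=> f0_reset; apply/ffunP => y; rewrite ffunE.
case: ifP => [y_in|y_out]; last by rewrite glue_out ?y_out.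
by rewrite -f0_reset ffunE y_in.
Qed.

Lemma block_glue f0 psi : block (glue f0 psi) = psi.
Proof. by apply/ffunP => -[a s]; rewrite ffunE glue_in. Qed.

Lemma reset_idem v0 f : reset v0 (reset v0 f) = reset v0 f.
Proof. by apply/ffunP => y; rewrite !ffunE; case: (tag y.1 == i). Qed.

Lemma card_by_glue v0 (P : pred {ffun W -> VG}) :
  #|P| = \sum_(f0 | reset v0 f0 == f0) #|[pred psi | P (glue f0 psi)]|.
Proof.
rewrite -sum1_card (partition_big (reset v0) (fun f0 => reset v0 f0 == f0)).
  apply: eq_bigr => f0 /eqP f0_reset.
  rewrite (reindex_onto (glue f0) block); last first.
    by move=> f /andP[_ /eqP <-]; rewrite glue_reset_block.
  rewrite -sum1_card; apply: eq_bigl => psi.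
  by rewrite reset_glue // block_glue !eqxx !andbT inE.
by move=> f _; rewrite reset_idem.
Qed.

Definition hom_off (M : pred VF) (f0 : {ffun W -> VG}) := [forall x, forall y,
  (tag x.1 != i) ==> (tag y.1 != i) ==> tensor_on M x y ==> G (f0 x) (f0 y)].

Lemma hom_off_eq (M M' : pred VF) f0 : (forall j, j != i -> M' j = M j) ->
  hom_off M f0 = hom_off M' f0.
Proof.
move=> eq_MM'; apply: eq_forallb => x; apply: eq_forallb => y.
have [//|x_out] := eqVneq (tag x.1) i; have [//|y_out] := eqVneq (tag y.1) i.
by rewrite /= /tensor_on eq_MM'.
Qed.

(* The sets A (s = true) and B (s = false) of the header. *)
Definition side_nbhd (f0 : {ffun W -> VG}) (s : bool) : {set VG} :=
  [set v | [forall y : W, (tag y.1 != i) ==> F i (tag y.1) ==> (y.2 == s) ==>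
                          G v (f0 y) && G (f0 y) v]].

Definition extensions (M : pred VF) (f0 : {ffun W -> VG}) :=
  [pred psi | is_hom (tensor_on M) G (glue f0 psi)].

Section Extension.

Variables (M : pred VF) (f0 : {ffun W -> VG}) (psi : {ffun VH i * bool -> VG}).

Lemma extension_hom_off : psi \in extensions M f0 -> hom_off M f0.
Proof.
rewrite inE => /is_homP hom_glue.
apply/forallP => x; apply/forallP => y; do 2!apply/implyP => ?.
by apply/implyP => /hom_glue; rewrite !glue_out.
Qed.

Lemma extension_side_nbhd a s :
  psi \in extensions M f0 -> psi (a, s) \in side_nbhd f0 s.
Proof.
rewrite inE => /is_homP hom_glue; rewrite inE.
apply/forallP => -[y t]; do 2!apply/implyP => ? /=; apply/implyP => /eqP ->.
have neq_ay : tag (Tagged VH a) != tag y by rewrite eq_sym.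
apply/andP; split.
  have := hom_glue (Tagged VH a, s) (y, s).
  by rewrite glue_in glue_out // tensor_on_out // eqxx andbT; apply.
have := hom_glue (y, s) (Tagged VH a, s).
by rewrite glue_in glue_out // tensor_on_out 1?eq_sym // symF eqxx andbT; apply.
Qed.

Lemma extension_block a b s t : psi \in extensions M f0 ->
  Hs a b -> (if M i then s != t else s == t) -> G (psi (a, s)) (psi (b, t)).
Proof.
rewrite inE => /is_homP /(_ (Tagged VH a, s) (Tagged VH b, t)) hom_glue Hab st.
by move: hom_glue; rewrite !glue_in tensor_on_in Hab st; apply.
Qed.

Lemma mem_extensions : hom_off M f0 ->
  (forall a s, psi (a, s) \in side_nbhd f0 s) ->
  (forall a b s t, Hs a b -> (if M i then s != t else s == t) ->
     G (psi (a, s)) (psi (b, t))) ->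
  psi \in extensions M f0.
Proof.
move=> /forallP f0_hom psi_nbhd psi_block; rewrite inE.
apply/is_homP => -[[j a] s] [[k b] t].
have [eq_ji|j_out] := eqVneq j i; have [eq_ki|k_out] := eqVneq k i.
- by subst j k; rewrite !glue_in tensor_on_in => /andP[]; apply: psi_block.
- subst j; rewrite glue_in glue_out // tensor_on_out 1?eq_sym //=.
  move=> /andP[Fik /eqP st]; subst t.
  have := psi_nbhd a s; rewrite inE => /forallP /(_ (Tagged VH b, s)).
  by rewrite /= k_out Fik eqxx => /andP[].
- subst k; rewrite glue_in glue_out // tensor_on_out //=.
  move=> /andP[Fji /eqP st]; subst t.
  have := psi_nbhd b s; rewrite inE => /forallP /(_ (Tagged VH a, s)).
  by rewrite /= j_out symF Fji eqxx => /andP[].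
- rewrite !glue_out // => Rab.
  move/forallP: (f0_hom (Tagged VH a, s)) => /(_ (Tagged VH b, t)) /=.
  by rewrite j_out k_out Rab.
Qed.

End Extension.

Lemma card_extensions_parallel (M : pred VF) f0 : M i = false ->
  #|extensions M f0| <=
  hom_ind (@Hs i) G (side_nbhd f0 true) * hom_ind (@Hs i) G (side_nbhd f0 false).
Proof.
move=> Mi.
pose hom_in (A : {set VG}) := [set f : {ffun VH i -> VG} |
  [forall u, f u \in A] && [forall u, forall v, Hs u v ==> G (f u) (f v)]].
have -> : hom_ind (@Hs i) G (side_nbhd f0 true) *
          hom_ind (@Hs i) G (side_nbhd f0 false) =
          #|setX (hom_in (side_nbhd f0 true)) (hom_in (side_nbhd f0 false))|.
  by rewrite cardsX /hom_ind !cardsE.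
pose split_sides (psi : {ffun VH i * bool -> VG}) :=
  ([ffun u => psi (u, true)] : {ffun VH i -> VG}, [ffun u => psi (u, false)]).
apply: (@leq_card_map _ _ _ _ split_sides).
  move=> psi1 psi2 [eq_t eq_f]; apply/ffunP => -[u []].
    by have := congr1 (fun h : {ffun VH i -> VG} => h u) eq_t; rewrite !ffunE.
  by have := congr1 (fun h : {ffun VH i -> VG} => h u) eq_f; rewrite !ffunE.
move=> psi psi_ext; have hom_side s : [forall u, forall v,
    Hs u v ==> G ([ffun u => psi (u, s)] u) ([ffun u => psi (u, s)] v)].
  apply/forallP => u; apply/forallP => v; apply/implyP => Huv; rewrite !ffunE.
  by apply: extension_block psi_ext Huv _; rewrite Mi.
rewrite !inE !hom_side !andbT.
by apply/andP; split; apply/forallP => u; rewrite ffunE;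
  apply: extension_side_nbhd psi_ext.
Qed.

Lemma card_extensions_cross (M : pred VF) f0 : M i = true -> hom_off M f0 ->
  hom_b (@Hs i) G (side_nbhd f0 true) (side_nbhd f0 false) <= #|extensions M f0|.
Proof.
move=> Mi f0_hom; apply/subset_leq_card/subsetP => psi.
rewrite !inE => /andP[/andP[/forallP side_t /forallP side_f] /forallP psi_hom].
apply: mem_extensions => // [a [] | a b s t Hab]; [exact: side_t | exact: side_f |].
rewrite Mi => st; move/forallP: (psi_hom (a, s)) => /(_ (b, t)) /implyP; apply.
by rewrite /tensorK2 /= Hab st.
Qed.

End Block.

Lemma hom_tensor_on_add i (M M' : pred VF) : cross_bipartite_swapping (@Hs i) G ->
  M i = false -> M' i = true -> (forall j, j != i -> M' j = M j) ->
  hom (tensor_on M) G <= hom (tensor_on M') G.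
Proof.
move=> swap_i Mi M'i eq_MM'.
have [v0 _|VG_empty] := pickP (@predT VG); last first.
  apply/subset_leq_card/subsetP => f _; rewrite inE.
  by apply/forallP => u; have := VG_empty (f u).
rewrite /hom (card_by_glue i v0) (card_by_glue i v0); apply: leq_sum => f0 _.
have [f0_hom|f0_not_hom] := boolP (hom_off i M f0); last first.
  rewrite (eq_card0 (A := extensions i M f0)) // => psi.
  by apply/negP => /extension_hom_off; apply/negP.
apply: leq_trans (card_extensions_parallel f0 Mi) _.
apply: leq_trans (swap_i _ _) _.
by apply: card_extensions_cross; rewrite // -(hom_off_eq f0 eq_MM').
Qed.

Lemma hom_tensor_on_grow (swap : forall i, cross_bipartite_swapping (@Hs i) G)
    (s : seq VF) : uniq s ->
  hom (tensor_on [in [::]]) G <= hom (tensor_on [in s]) G.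
Proof.
elim: s => [//|i s IH] /= /andP[i_new /IH]; move/leq_trans; apply.
apply: hom_tensor_on_add (swap i) _ _ _.
- exact: negbTE.
- exact: mem_head.
- by move=> j j_neq; rewrite in_cons (negbTE j_neq).
Qed.

End BlowUp.

Theorem theorem5p1 (VG : finType) (G : rel VG) (symG : symmetric G)
  (VF : finType) (F : rel VF) (symF : symmetric F) (irrF : irreflexive F)
  (bipF : bipartite F)
  (VH : VF -> finType) (Hs : forall i, rel (VH i))
  (symH : forall i, symmetric (Hs i)) (irrH : forall i, irreflexive (Hs i))
  (swH : forall i, cross_bipartite_swapping (Hs i) G) :
  bipartite_swapping (blowup F Hs) G.
Proof.
have [c c_proper] := bipF; rewrite /bipartite_swapping.
have in_nil_false (j : VF) : [in [::]] j = false by [].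
apply: leq_trans (hom_sq_le_tensor_on_none G F Hs in_nil_false) _.
apply: leq_trans (hom_tensor_on_grow symF irrF swH (enum_uniq VF)) _.
by apply: hom_tensor_on_all_le c_proper _ => j; rewrite /= mem_enum.
Qed.
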